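(* Let $P\ge 1$, $m\ge 2$, $y\in\mathbb{R}^P$, $z_1,\dots,z_m\in\mathbb{R}^P$, $Z=[z_1,\dots,z_m]$, $d=(d_1,\dots,d_m)^{\mathsf T}$ with all $d_j>0$, $D=\operatorname{diag}(d)$, $\lambda>0$ and $\rho\in\mathbb{R}$. Assume $d_j>d_1$ for all $j\in\{2,\dots,m\}$ (as is the case when $z_1$ is the unique nearest neighbour of $y$ and the weights are strictly increasing with distance to $y$). Let $$f(\beta)=\tfrac12\,\beta^{\mathsf T}\big(Z^{\mathsf T}Z+\lambda D^{\mathsf T}D\big)\beta+\big(\rho\, d-Z^{\mathsf T}y\big)^{\mathsf T}\beta .$$ If $$\rho>\max_{j\in\{2,\dots,m\}}\frac{(z_1-z_j)^{\mathsf T}(z_1-y)+\lambda d_1^2}{d_j-d_1},$$ then $e_1=(1,0,\dots,0)^{\mathsf T}$ is the (unique) minimiser of $f$ over the unit simplex $\Delta^m=\{\beta\in\mathbb{R}^m:\beta\ge 0,\ \beta^{\mathsf T}\mathbf 1=1\}$. *)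

From HB Require Import structures.
From mathcomp Require Import all_boot all_order all_algebra.
Set Implicit Arguments. Unset Strict Implicit. Unset Printing Implicit Defensive.
Import Order.TTheory GRing.Theory Num.Theory.
Local Open Scope ring_scope.

Definition unit_simplex (R : numDomainType) (m : nat) (b : 'cV[R]_m) : Prop :=
  (forall i, 0 <= b i 0) /\ \sum_(i < m) b i 0 = 1.

Definition obj (R : numFieldType) (P m : nat) (Z : 'M[R]_(P, m)) (y : 'cV[R]_P)
    (d : 'cV[R]_m) (lam rho : R) (b : 'cV[R]_m) : R :=
  let D := diag_mx d^T in
  (2^-1 *: (b^T *m (Z^T *m Z + lam *: (D^T *m D)) *m b)
   + (rho *: d - Z^T *m y)^T *m b) 0 0.

Definition ebasis (R : numDomainType) (m : nat) (i : 'I_m) : 'cV[R]_m :=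
  \col_(k < m) (if k == i then 1 else 0).

From HB Require Import structures.
From mathcomp Require Import all_boot all_order all_algebra.
From mathcomp Require Import ring.
Import Order.TTheory GRing.Theory Num.Theory.
Set Implicit Arguments. Unset Strict Implicit. Unset Printing Implicit Defensive.
Local Open Scope ring_scope.

(* The objective is the quadratic  f(b) = 1/2 b^T H b + c^T b  with the
   symmetric matrix  H = Z^T Z + lam D^T D  and  c = rho d - Z^T y.
   Writing  b = e_1 + u,  the exact second-order expansion gives
     f(b) = f(e_1) + g^T u + 1/2 u^T H u,      g := H e_1 + c  (the gradient).
   The proof shows that both increments are controlled:
   - u^T H u = |Z u|^2 + lam sum_k (d_k u_k)^2 > 0 for u <> 0, because lam > 0
     and every d_k > 0 (H is positive definite);
   - for b in the simplex,  g^T (b - e_1) = sum_k (g_k - g_1) b_k,  and a direct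
     computation gives  g_k - g_1 = rho (d_k - d_1) - ((z_1 - z_k)^T (z_1 - y)
     + lam d_1^2),  which is positive exactly by the lower bound on rho. *)

Lemma trmx_mulmxE (R : pzSemiRingType) m n p (A : 'M[R]_(m, n)) (B : 'M[R]_(m, p))
    k l : (A^T *m B) k l = \sum_i A i k * B i l.
Proof. by rewrite mxE; apply: eq_bigr => i _; rewrite mxE. Qed.

Section Simplex.
Variables (R : numFieldType) (m : nat).
Implicit Types (b g : 'cV[R]_m) (i k : 'I_m).

Lemma ebasisE i k : ebasis R i k 0 = (k == i)%:R.
Proof. by rewrite mxE; case: eqP. Qed.

Lemma unit_simplex_ebasis i : unit_simplex (ebasis R i).
Proof.
split=> [k|]; first by rewrite ebasisE ler0n.
rewrite (bigD1 i) //= ebasisE eqxx big1 ?addr0 // => k /negbTE ki.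
by rewrite ebasisE ki.
Qed.

(* Since b sums to 1, the linear form g moves from e_i to b by a weighted sum
   of the gaps g_k - g_i. *)
Lemma dot_simplex_ebasis g b i : unit_simplex b ->
  (g^T *m (b - ebasis R i)) 0 0 = \sum_k (g k 0 - g i 0) * b k 0.
Proof.
move=> [_ b1].
have -> : \sum_k (g k 0 - g i 0) * b k 0 = \sum_k g k 0 * b k 0 - g i 0 * \sum_k b k 0.
  by rewrite mulr_sumr -sumrB; apply: eq_bigr => k _; rewrite mulrBl.
rewrite b1 mulr1.
rewrite trmx_mulmxE (bigD1 i) //= [X in _ = X - _](bigD1 i) //= addrAC.
congr (_ + _); last by apply: eq_bigr => k ki; rewrite !mxE (negbTE ki) subr0.
by rewrite !mxE eqxx mulrBr mulr1.
Qed.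

Lemma dot_simplex_ebasis_ge0 g b i : unit_simplex b ->
  (forall k, g i 0 <= g k 0) -> 0 <= (g^T *m (b - ebasis R i)) 0 0.
Proof.
move=> sb gmin; rewrite dot_simplex_ebasis //.
by apply: sumr_ge0 => k _; rewrite mulr_ge0 ?subr_ge0 //; case: sb.
Qed.

Lemma mulmx_ebasis p (M : 'M[R]_(p, m)) i : M *m ebasis R i = col i M.
Proof.
rewrite colE; congr (_ *m _); apply/matrixP => k l.
by rewrite (ord1 l) ebasisE mxE andbT.
Qed.

End Simplex.

Section Quadratic.
Variables (R : realFieldType) (n : nat).
Implicit Types (H : 'M[R]_n) (a b c u : 'cV[R]_n).

Definition quadf H c b : R := (2^-1 *: (b^T *m H *m b) + c^T *m b) 0 0.

Lemma quadf_expand H c a u : H^T = H ->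
  quadf H c (a + u) =
  quadf H c a + ((H *m a + c)^T *m u) 0 0 + 2^-1 * (u^T *m H *m u) 0 0.
Proof.
move=> HT.
have cross : u^T *m H *m a = (a^T *m H *m u)^T.
  by rewrite !trmx_mul trmxK HT mulmxA.
rewrite /quadf !linearD /= !mulmxDl trmx_mul HT cross !mxE.
by field.
Qed.

Lemma quadf_lt H c a b : H^T = H ->
  0 <= ((H *m a + c)^T *m (b - a)) 0 0 -> 0 < ((b - a)^T *m H *m (b - a)) 0 0 ->
  quadf H c a < quadf H c b.
Proof.
move=> HT grad curv; rewrite -[b](subrK a) addrC quadf_expand //.
by rewrite -addrA ltrDl ltr_wpDl // mulr_gt0 ?invr_gt0 ?ltr0n.
Qed.

End Quadratic.

Section Objective.
Variables (R : realFieldType) (P m : nat).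
Variables (Z : 'M[R]_(P, m)) (y : 'cV[R]_P) (d : 'cV[R]_m) (lam rho : R).

Let D := diag_mx d^T.
Definition hess : 'M[R]_m := Z^T *m Z + lam *: (D^T *m D).
Definition lin : 'cV[R]_m := rho *: d - Z^T *m y.

Lemma obj_quadf b : obj Z y d lam rho b = quadf hess lin b.
Proof. by []. Qed.

Lemma hess_sym : hess^T = hess.
Proof. by rewrite /hess linearD linearZ /= !trmx_mul !trmxK. Qed.

Lemma hess_form (u : 'cV[R]_m) :
  (u^T *m hess *m u) 0 0 = \sum_k (Z *m u) k 0 ^+ 2 + lam * \sum_k (d k 0 * u k 0) ^+ 2.
Proof.
have sq p (v : 'cV[R]_p) : (v^T *m v) 0 0 = \sum_k v k 0 ^+ 2.
  by rewrite trmx_mulmxE; apply: eq_bigr => k _; rewrite expr2.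
have EZ : u^T *m (Z^T *m Z) *m u = (Z *m u)^T *m (Z *m u).
  by rewrite trmx_mul !mulmxA.
have ED : u^T *m (D^T *m D) *m u = (D *m u)^T *m (D *m u).
  by rewrite trmx_mul !mulmxA.
rewrite /hess mulmxDr mulmxDl -scalemxAr -scalemxAl EZ ED [LHS]mxE [X in _ + X]mxE !sq.
by congr (_ + lam * _); apply: eq_bigr => k _; rewrite /D mul_diag_mx !mxE.
Qed.

Lemma hess_posdef (u : 'cV[R]_m) : 0 < lam -> (forall k, d k 0 != 0) -> u != 0 ->
  0 < (u^T *m hess *m u) 0 0.
Proof.
move=> lam_gt0 d_neq0 u_neq0.
have [j uj] : exists j, u j 0 != 0.
  apply/existsP; apply: contraR u_neq0; rewrite negb_exists => /forallP u0.
  by apply/eqP/matrixP => i k; rewrite (ord1 k) mxE; apply/eqP; rewrite -[_ == _]negbK.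
have sumZ : 0 <= \sum_k (Z *m u) k 0 ^+ 2 by apply: sumr_ge0 => k _; exact: sqr_ge0.
have sumD : 0 < \sum_k (d k 0 * u k 0) ^+ 2.
  rewrite lt_def sumr_ge0 ?andbT => [|k _]; last exact: sqr_ge0.
  apply/eqP => sum0; have /eqP := psumr_eq0P (fun k _ => sqr_ge0 _) sum0 (i := j) isT.
  by rewrite sqrf_eq0 mulf_eq0 (negbTE uj) (negbTE (d_neq0 j)).
by rewrite hess_form ltr_wpDl // mulr_gt0.
Qed.

Lemma diag_gram k l : (D^T *m D) k l = d k 0 * (d k 0 *+ (k == l)).
Proof. by rewrite /D tr_diag_mx mul_diag_mx !mxE. Qed.

Lemma hessE k l :
  hess k l = \sum_p Z p k * Z p l + lam * (d k 0 * (d k 0 *+ (k == l))).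
Proof. by rewrite -diag_gram -trmx_mulmxE !mxE. Qed.

Lemma linE k : lin k 0 = rho * d k 0 - \sum_p Z p k * y p 0.
Proof. by rewrite -trmx_mulmxE !mxE. Qed.

(* The gradient at the vertex e_i, compared coordinatewise with its i-th
   entry, is the quantity bounded by the hypothesis on rho. *)
Lemma grad_gap i k : k != i ->
  let g := hess *m ebasis R i + lin in
  g k 0 - g i 0 =
  rho * (d k 0 - d i 0)
  - (((col i Z - col k Z)^T *m (col i Z - y)) 0 0 + lam * d i 0 ^+ 2).
Proof.
move=> ki g.
have gE l : g l 0 = hess l i + lin l 0.
  by rewrite /g mulmx_ebasis !mxE.
have dotE : ((col i Z - col k Z)^T *m (col i Z - y)) 0 0 =
    \sum_p Z p i * Z p i - \sum_p Z p i * y p 0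
    - \sum_p Z p k * Z p i + \sum_p Z p k * y p 0.
  rewrite -!sumrB -big_split trmx_mulmxE /=.
  by apply: eq_bigr => p _; rewrite !mxE; ring.
rewrite dotE !gE !hessE !linE eqxx (negbTE ki) mulr0n mulr1n mulr0 expr2.
ring.
Qed.

End Objective.

Theorem proposition2 (R : realFieldType) (P m : nat)
  (y : 'cV[R]_P.+1) (Z : 'M[R]_(P.+1, m.+2)) (d : 'cV[R]_m.+2) (lam rho : R) :
  (forall j, 0 < d j 0) ->
  0 < lam ->
  (forall j : 'I_m.+2, j != ord0 -> d ord0 0 < d j 0) ->
  (forall j : 'I_m.+2, j != ord0 ->
     (((col ord0 Z - col j Z)^T *m (col ord0 Z - y)) 0 0 + lam * d ord0 0 ^+ 2)
       / (d j 0 - d ord0 0) < rho) ->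
  unit_simplex (ebasis R (ord0 : 'I_m.+2)) /\
  (forall b : 'cV[R]_m.+2, unit_simplex b -> b != ebasis R ord0 ->
     obj Z y d lam rho (ebasis R ord0) < obj Z y d lam rho b).
Proof.
move=> d_gt0 lam_gt0 d_min rho_big; split=> [|b b_simplex b_neq_e].
  exact: unit_simplex_ebasis.
rewrite !obj_quadf; apply: quadf_lt; first exact: hess_sym.
-
  apply: dot_simplex_ebasis_ge0 => // k.
  have [->|k_neq0] := eqVneq k ord0; first by [].
  rewrite -subr_ge0 grad_gap // subr_ge0 ltW // -ltr_pdivrMr ?subr_gt0 ?d_min //.
  exact: rho_big.
- apply: hess_posdef => // [k|]; first by rewrite gt_eqF.
  by rewrite subr_eq0.
Qed.
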